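(* Identify $\mathbb{S}_n$ with its image in $\mathrm{End}_K(P_n)$ under the action described in the context. Then $$G_n=\{\sigma_\varphi\mid \varphi\in\mathrm{Aut}_K(P_n)\ \text{such that}\ \varphi\mathbb{S}_n\varphi^{-1}=\mathbb{S}_n\},\qquad \sigma_\varphi(a):=\varphi a\varphi^{-1}\ (a\in\mathbb{S}_n).$$
   Context: $K$ is a field of characteristic zero. $\mathbb{S}_n$ is the $K$-algebra generated by $x_1,\dots,x_n,y_1,\dots,y_n$ with defining relations $y_ix_i=1$ ($1\le i\le n$) and $[x_i,y_j]=[x_i,x_j]=[y_i,y_j]=0$ for $i\ne j$; $G_n=\mathrm{Aut}_{K\text{-alg}}(\mathbb{S}_n)$. $P_n=K[x_1,\dots,x_n]$ is a faithful $\mathbb{S}_n$-module via $x_i*x^\alpha=x^{\alpha+e_i}$ and $y_i*x^\alpha=x^{\alpha-e_i}$ if $\alpha_i>0$, $y_i*x^\alpha=0$ if $\alpha_i=0$ (here $x^\alpha=x_1^{\alpha_1}\cdots x_n^{\alpha_n}$, $e_i$ the standard basis vectors of $\mathbb{Z}^n$). $\mathrm{Aut}_K(P_n)$ is the group of invertible $K$-linear maps $P_n\to P_n$. *)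

From HB Require Import structures.
From mathcomp Require Import all_boot all_order all_algebra.
Set Implicit Arguments. Unset Strict Implicit. Unset Printing Implicit Defensive.
Import GRing.Theory.
Local Open Scope ring_scope.

Section Jacobian.
Variables (K : fieldType) (n : nat).

(* exponent vectors alpha in N^n; x^alpha is the basis vector indexed by alpha *)
Definition monom := {ffun 'I_n -> nat}.
Definition incr (i : 'I_n) (a : monom) : monom := [ffun j => a j + (j == i)]%N.
Definition decr (i : 'I_n) (a : monom) : monom := [ffun j => a j - (j == i)]%N.

(* P_n = K[x_1..x_n], an element is its finitely supported coefficient function *)
Definition finsupp (f : monom -> K) := exists s : seq monom, forall a, f a != 0 -> a \in s.
Definition Pn := {f : monom -> K | finsupp f}.
Definition coef (p : Pn) : monom -> K := proj1_sig p.

Lemma padd_fs (p q : Pn) : finsupp (fun a => coef p a + coef q a).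
Proof.
case: p => f [s Hs]; case: q => g [t Ht]; exists (s ++ t) => a /=.
rewrite mem_cat; case: (boolP (f a == 0)) => [/eqP -> |/Hs -> //].
by rewrite add0r => /Ht ->; rewrite orbT.
Qed.
Definition padd (p q : Pn) : Pn := exist _ _ (padd_fs p q).

Lemma pscale_fs (c : K) (p : Pn) : finsupp (fun a => c * coef p a).
Proof.
case: p => f [s Hs]; exists s => a /=.
by case: (boolP (f a == 0)) => [/eqP -> | /Hs //]; rewrite mulr0 eqxx.
Qed.
Definition pscale (c : K) (p : Pn) : Pn := exist _ _ (pscale_fs c p).

(* x_i * x^alpha = x^(alpha + e_i) *)
Lemma X_fs (i : 'I_n) (p : Pn) :
  finsupp (fun a => if (0 < a i)%N then coef p (decr i a) else 0).
Proof.
case: p => f [s Hs]; exists (map (incr i) s) => a /=.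
case: ifP => [Hai /Hs Hin|]; last by rewrite eqxx.
have -> : a = incr i (decr i a).
  by apply/ffunP => j; rewrite !ffunE; case: eqP => [-> |]; rewrite ?subn1 ?addn1 ?prednK ?addn0 ?subn0.
exact: map_f.
Qed.
Definition Xop (i : 'I_n) (p : Pn) : Pn := exist _ _ (X_fs i p).

(* y_i * x^alpha = x^(alpha - e_i) if alpha_i > 0, and 0 if alpha_i = 0 *)
Lemma Y_fs (i : 'I_n) (p : Pn) : finsupp (fun a => coef p (incr i a)).
Proof.
case: p => f [s Hs]; exists (map (decr i) s) => a /= /Hs Hin.
have -> : a = decr i (incr i a).
  by apply/ffunP => j; rewrite !ffunE addnK.
exact: map_f.
Qed.
Definition Yop (i : 'I_n) (p : Pn) : Pn := exist _ _ (Y_fs i p).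

Definition plinear (f : Pn -> Pn) :=
  (forall p q, f (padd p q) = padd (f p) (f q)) /\
  (forall c p, f (pscale c p) = pscale c (f p)).

(* The image of S_n in End_K(P_n): the K-subalgebra generated by the
   operators x_i, y_i (1 <= i <= n). *)
Inductive inS : (Pn -> Pn) -> Prop :=
| inS_one : inS id
| inS_X i : inS (Xop i)
| inS_Y i : inS (Yop i)
| inS_add a b : inS a -> inS b -> inS (fun p => padd (a p) (b p))
| inS_scale c a : inS a -> inS (fun p => pscale c (a p))
| inS_mul a b : inS a -> inS b -> inS (a \o b).

Definition Sn := {a : Pn -> Pn | inS a}.
Definition sval (a : Sn) : Pn -> Pn := proj1_sig a.

Definition sone : Sn := exist _ _ inS_one.
Definition sadd (a b : Sn) : Sn :=
  exist _ _ (inS_add (proj2_sig a) (proj2_sig b)).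
Definition sscale (c : K) (a : Sn) : Sn := exist _ _ (inS_scale c (proj2_sig a)).
Definition smul (a b : Sn) : Sn :=
  exist _ _ (inS_mul (proj2_sig a) (proj2_sig b)).

Definition is_alg_aut (s : Sn -> Sn) :=
  [/\ bijective s,
      forall a b, sval (s (sadd a b)) = sval (sadd (s a) (s b)),
      forall c a, sval (s (sscale c a)) = sval (sscale c (s a)),
      forall a b, sval (s (smul a b)) = sval (smul (s a) (s b)) &
      sval (s sone) = sval sone].

Definition normalizes (phi psi : Pn -> Pn) :=
  [/\ plinear phi, cancel phi psi, cancel psi phi,
      (forall a, inS a -> inS (phi \o a \o psi)) &
      (forall b, inS b -> exists2 a, inS a & b = phi \o a \o psi)].

End Jacobian.

(* The converse rests on one structural fact: S_n contains every rank-one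
   operator  E(q, b) : p |-> (coefficient of x^b in p) * q.  Indeed
   E(1, 0) = prod_i (1 - x_i y_i) is the projection onto the constants,
   E(x_i q, b) = x_i E(q, b),  E(q, b + e_i) = E(q, b) y_i, and E is linear
   in q.  Given an automorphism s, the idempotent s(E(1,0)) is nonzero, so it
   fixes some nonzero w; then  phi(q) := s(E(q,0)) w  is a linear bijection of
   P_n with  phi(a q) = s(a) phi(q)  for every a in S_n, i.e. s = sigma_phi.
   No assumption on the characteristic of K is needed. *)

From Stdlib Require Import ProofIrrelevance FunctionalExtensionality.
From Stdlib Require Import ClassicalEpsilon Classical.
From HB Require Import structures.
From mathcomp Require Import all_boot all_order all_algebra.
Local Open Scope ring_scope.
Set Implicit Arguments. Unset Strict Implicit. Unset Printing Implicit Defensive.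
Import GRing.Theory.

Section Operators.
Variables (K : fieldType) (n : nat).
Implicit Types (p q r : Pn K n) (al b : monom n) (i : 'I_n).

Lemma Pn_ext p q : (forall a, coef p a = coef q a) -> p = q.
Proof.
case: p q => f Hf [g Hg] /= fg.
have E : f = g by apply: functional_extensionality.
by subst g; f_equal; apply: proof_irrelevance.
Qed.

Lemma Sn_ext (a b : Sn K n) : sval a = sval b -> a = b.
Proof. by case: a b => f Hf [g Hg] /= E; subst g; f_equal; apply: proof_irrelevance. Qed.

Lemma inS_linear (a : Pn K n -> Pn K n) : inS a -> plinear a.
Proof.
elim=> {a} [|i|i|a b _ [aD aZ] _ [bD bZ]|c a _ [aD aZ]|a b _ [aD aZ] _ [bD bZ]].
- by [].
- by split=> [p q|c p]; apply: Pn_ext => al /=; case: ifP; rewrite ?addr0 ?mulr0.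
- by split=> [p q|c p]; apply: Pn_ext.
- split=> [p q|c p]; rewrite ?aD ?bD ?aZ ?bZ; apply: Pn_ext => al /=.
    by rewrite addrACA.
  by rewrite mulrDr.
- split=> [p q|c' p]; rewrite ?aD ?aZ; apply: Pn_ext => al /=.
    by rewrite mulrDr.
  by rewrite mulrCA.
- by split=> [p q|c p] /=; rewrite ?bD ?aD ?bZ ?aZ.
Qed.

Definition mon0 : monom n := [ffun _ => 0%N].

Lemma xmon_fs al : finsupp (fun a : monom n => if a == al then (1 : K) else 0).
Proof. by exists [:: al] => a; case: (a =P al) => [->|]; rewrite ?mem_seq1 ?eqxx. Qed.
Definition xmon al : Pn K n := exist _ _ (xmon_fs al).

Lemma incr_decr i al : (0 < al i)%N -> incr i (decr i al) = al.
Proof.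
move=> al_i; apply/ffunP => j; rewrite !ffunE; case: eqP => [-> |] /=;
  by rewrite ?subn1 ?addn1 ?prednK ?addn0 ?subn0.
Qed.

Lemma decr_incr i al : decr i (incr i al) = al.
Proof. by apply/ffunP => j; rewrite !ffunE addnK. Qed.

Lemma xmon_incr i al : xmon (incr i al) = Xop i (xmon al).
Proof.
apply: Pn_ext => a /=; case: (a =P incr i al) => [->|a_neq].
  by rewrite ffunE eqxx addn1 /= decr_incr eqxx.
case: ifP => // a_i; case: (decr i a =P al) => // E.
by case: a_neq; rewrite -E incr_decr.
Qed.

Lemma monom_ind (P : monom n -> Prop) :
  P mon0 -> (forall i al, P al -> P (incr i al)) -> forall al, P al.
Proof.
move=> P0 PS al; move: {2}(\sum_j al j)%N (leqnn (\sum_j al j)%N) => k.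
elim: k al => [|k IH] al al_le.
  suff -> : al = mon0 by [].
  apply/ffunP => j; rewrite ffunE; apply/eqP; rewrite -leqn0.
  by apply: leq_trans al_le; rewrite (bigD1 j) //= leq_addr.
case: (pickP (fun i => 0 < al i)%N) => [i al_i|al0]; last first.
  suff -> : al = mon0 by [].
  by apply/ffunP => j; rewrite ffunE; move: (al0 j) => /negbT; rewrite lt0n negbK => /eqP.
rewrite -(incr_decr al_i); apply/PS/IH.
have sum_decr : (\sum_j decr i al j = (al i).-1 + \sum_(j | j != i) al j)%N.
  rewrite (bigD1 i) //= ffunE eqxx subn1; congr (_ + _)%N.
  by apply: eq_bigr => j /negbTE ji; rewrite ffunE ji subn0.
by rewrite sum_decr; move: al_le; rewrite (bigD1 i) //= -(prednK al_i) addSn ltnS.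
Qed.

Lemma Pn_span_ind (P : Pn K n -> Prop) :
  (forall al, P (xmon al)) ->
  (forall p q, P p -> P q -> P (padd p q)) ->
  (forall c p, P p -> P (pscale c p)) -> forall p, P p.
Proof.
move=> Pmon PD PZ [f [s f_s]]; elim: s f f_s => [|al s IH] f f_s.
  have -> : exist (@finsupp K n) f (ex_intro _ [::] f_s) = pscale 0 (xmon mon0).
    apply: Pn_ext => a /=; rewrite mul0r.
    by case: (boolP (f a == 0)) => [/eqP //|/f_s].
  exact: PZ.
pose g a := if a == al then 0 else f a.
have g_s a : g a != 0 -> a \in s.
  rewrite /g; case: (a =P al) => [_|a_neq]; first by rewrite eqxx.
  by move/f_s; rewrite in_cons => /orP [/eqP|].
have -> : exist (@finsupp K n) f (ex_intro _ (al :: s) f_s) =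
          padd (pscale (f al) (xmon al)) (exist (@finsupp K n) g (ex_intro _ s g_s)).
  apply: Pn_ext => a /=; rewrite /g; case: (a =P al) => [->|_].
    by rewrite mulr1 addr0.
  by rewrite mulr0 add0r.
by apply: PD; [apply: PZ | apply: IH].
Qed.

Definition rank1 q b : Pn K n -> Pn K n := fun p => pscale (coef p b) q.

Lemma rank1_Y q i b : rank1 q (incr i b) = rank1 q b \o Yop i.
Proof. by []. Qed.

Lemma rank1_X q i b : rank1 (Xop i q) b = Xop i \o rank1 q b.
Proof.
apply: functional_extensionality => p /=.
by case: (inS_linear (inS_X K i)) => _ ->.
Qed.

Lemma rank1_add q r b : rank1 (padd q r) b = fun p => padd (rank1 q b p) (rank1 r b p).
Proof. by apply: functional_extensionality => p; apply: Pn_ext => a /=; rewrite mulrDr. Qed.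

Lemma rank1_scale c q b : rank1 (pscale c q) b = fun p => pscale c (rank1 q b p).
Proof. by apply: functional_extensionality => p; apply: Pn_ext => a /=; rewrite mulrCA. Qed.

Definition kill_x i : Pn K n -> Pn K n := fun p => padd p (pscale (-1) (Xop i (Yop i p))).

Lemma kill_x_in i : inS (kill_x i).
Proof. by apply: inS_add; [exact: inS_one | apply/inS_scale/inS_mul; constructor]. Qed.

Lemma coef_kill_x i p al : coef (kill_x i p) al = if (0 < al i)%N then 0 else coef p al.
Proof.
rewrite /=; case: ifP => al_i; last by rewrite mulr0 addr0.
by rewrite incr_decr // mulN1r subrr.
Qed.

(* prod_i (1 - x_i y_i) = E(1, 0) is the projection onto the constants. *)
Lemma rank1_const_in : inS (rank1 (xmon mon0) mon0).
Proof.
pose kill_all (l : seq 'I_n) := foldr (fun i g => kill_x i \o g) id l.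
have kill_all_in l : inS (kill_all l).
  by elim: l => [|i l IH] /=; [exact: inS_one | exact: inS_mul (kill_x_in i) IH].
have coef_kill_all l p al :
    coef (kill_all l p) al = if all (fun i => al i == 0%N) l then coef p al else 0.
  elim: l => [|i l IH] //; rewrite [kill_all _ _]/= coef_kill_x IH lt0n /=.
  by case: (al i == 0%N).
suff -> : rank1 (xmon mon0) mon0 = kill_all (enum 'I_n) by [].
apply: functional_extensionality => p; apply: Pn_ext => al.
rewrite coef_kill_all /=.
have -> : all (fun i => al i == 0%N) (enum 'I_n) = (al == mon0).
  apply/allP/eqP => [al0|-> i _]; last by rewrite ffunE.
  by apply/ffunP => i; rewrite ffunE; apply/eqP/al0; rewrite mem_enum.
by case: eqP => [->|]; rewrite ?mulr1 ?mulr0.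
Qed.

Lemma rank1_in q b : inS (rank1 q b).
Proof.
elim/monom_ind: b => [|i b IH]; last by rewrite rank1_Y; apply: inS_mul IH (inS_Y K i).
elim/Pn_span_ind: q => [al|q r Hq Hr|c q Hq]; last 2 first.
- by rewrite rank1_add; apply: inS_add.
- by rewrite rank1_scale; apply: inS_scale.
elim/monom_ind: al => [|i al IH]; first exact: rank1_const_in.
by rewrite xmon_incr rank1_X; apply: inS_mul IH; exact: inS_X.
Qed.

Definition Srank1 q b : Sn K n := exist _ _ (rank1_in q b).

End Operators.
Arguments mon0 {n}.

Lemma conj_is_alg_aut (K : fieldType) (n : nat) (phi psi : Pn K n -> Pn K n) :
  normalizes phi psi ->
  exists s : Sn K n -> Sn K n,
    is_alg_aut s /\ forall a : Sn K n, sval (s a) = phi \o sval a \o psi.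
Proof.
case=> [[phiD phiZ] phiK psiK conj_in conj_onto].
have conj_inv_in b : inS b -> inS (psi \o b \o phi).
  move=> /conj_onto [a Ha ->].
  suff -> : psi \o (phi \o a \o psi) \o phi = a by [].
  by apply: functional_extensionality => p /=; rewrite !phiK.
pose s (a : Sn K n) : Sn K n := exist _ _ (conj_in _ (proj2_sig a)).
pose t (a : Sn K n) : Sn K n := exist _ _ (conj_inv_in _ (proj2_sig a)).
exists s; split=> //; split.
- exists t => a; apply: Sn_ext; apply: functional_extensionality => p /=.
    by rewrite !phiK.
  by rewrite !psiK.
- by move=> a b; apply: functional_extensionality => p /=; rewrite phiD.
- by move=> c a; apply: functional_extensionality => p /=; rewrite phiZ.
- by move=> a b; apply: functional_extensionality => p /=; rewrite phiK.
- by apply: functional_extensionality => p /=; rewrite psiK.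
Qed.

(* Every bijective, additive, K-homogeneous, multiplicative s : S_n -> S_n is
   some sigma_phi. *)
Section AutomorphismIsConjugation.
Variables (K : fieldType) (n : nat) (s : Sn K n -> Sn K n).
Hypotheses (s_bij : bijective s)
  (s_add : forall a b, sval (s (sadd a b)) = sval (sadd (s a) (s b)))
  (s_scale : forall c a, sval (s (sscale c a)) = sval (sscale c (s a)))
  (s_mul : forall a b, sval (s (smul a b)) = sval (smul (s a) (s b))).

Let one : Pn K n := @xmon K n mon0.
Let proj0 : Sn K n := Srank1 one mon0.

Lemma proj0_idem : smul proj0 proj0 = proj0.
Proof.
by apply: Sn_ext; apply: functional_extensionality => p; apply: Pn_ext => a /=; rewrite eqxx !mulr1.
Qed.

(* Since s is injective and proj0 != 0, the operator s(proj0) is nonzero. *)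
Lemma s_proj0_nonzero : exists p gm, coef (sval (s proj0) p) gm != 0.
Proof.
apply: NNPP => s_proj0_0.
have s_proj0_eq : s proj0 = s (sscale 0 proj0).
  apply: Sn_ext; rewrite s_scale; apply: functional_extensionality => p.
  apply: Pn_ext => a /=; rewrite mul0r.
  by case: (eqVneq (coef (sval (s proj0) p) a) 0) => // nz; case: s_proj0_0; exists p, a.
have := congr1 (fun x : Sn K n => coef (sval x one) mon0) (bij_inj s_bij s_proj0_eq).
by rewrite /= eqxx mulr1 mul0r; apply/eqP; rewrite oner_neq0.
Qed.

(* A nonzero vector w fixed by the idempotent s(proj0), hence in its image. *)
Lemma fixed_vector : exists w gm, sval (s proj0) w = w /\ coef w gm != 0.
Proof.
have [p [gm nz]] := s_proj0_nonzero.
exists (sval (s proj0) p), gm; split=> //.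
by have := congr1 (fun f => f p) (s_mul proj0 proj0); rewrite proj0_idem.
Qed.

Section Intertwiner.
Variables (w : Pn K n) (gm : monom n).
Hypotheses (w_fixed : sval (s proj0) w = w) (w_gm : coef w gm != 0).

Definition phi (q : Pn K n) : Pn K n := sval (s (Srank1 q mon0)) w.

Lemma phi_one : phi one = w.
Proof. exact: w_fixed. Qed.

(* phi o a = s(a) o phi, since E(a q, 0) = a E(q, 0). *)
Lemma phi_intertwines (a : Sn K n) q : phi (sval a q) = sval (s a) (phi q).
Proof.
rewrite /phi; have -> : Srank1 (sval a q) mon0 = smul a (Srank1 q mon0).
  apply: Sn_ext; apply: functional_extensionality => p /=.
  by case: (inS_linear (proj2_sig a)) => _ ->.
by rewrite s_mul.
Qed.

Lemma phi_linear : plinear phi.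
Proof.
split=> [q r|c q]; rewrite /phi.
  have -> : Srank1 (padd q r) mon0 = sadd (Srank1 q mon0) (Srank1 r mon0).
    by apply: Sn_ext; rewrite /= rank1_add.
  by rewrite s_add.
have -> : Srank1 (pscale c q) mon0 = sscale c (Srank1 q mon0).
  by apply: Sn_ext; rewrite /= rank1_scale.
by rewrite s_scale.
Qed.

(* Applying phi o E(1, b) = s(E(1, b)) o phi recovers every coefficient of q. *)
Lemma phi_inj : injective phi.
Proof.
move=> q r phi_qr; apply: Pn_ext => b.
have phiE q' : phi (sval (Srank1 one b) q') = pscale (coef q' b) w.
  by case: phi_linear => _ ->; rewrite phi_one.
have := phiE q; rewrite phi_intertwines phi_qr -phi_intertwines phiE.
by move/(congr1 (fun x => coef x gm)) => /= /(mulIf w_gm).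
Qed.

(* r = s(E(c^-1 r, gm)) w = phi (s^-1(E(c^-1 r, gm)) 1), with c = coef w gm. *)
Lemma phi_surj r : exists q, phi q = r.
Proof.
have [t sK tK] := s_bij.
exists (sval (t (Srank1 (pscale (coef w gm)^-1 r) gm)) one).
rewrite phi_intertwines tK phi_one; apply: Pn_ext => a /=.
by rewrite mulrA mulrV ?mul1r // unitfE.
Qed.

Lemma conj_of_intertwiner :
  exists phi psi : Pn K n -> Pn K n,
    normalizes phi psi /\ forall a : Sn K n, sval (s a) = phi \o sval a \o psi.
Proof.
pose psi r := proj1_sig (constructive_indefinite_description _ (phi_surj r)).
have psiK : cancel psi phi.
  by move=> r; rewrite /psi; case: constructive_indefinite_description.
have phiK : cancel phi psi by move=> q; apply: phi_inj; rewrite psiK.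
have s_conj (a : Sn K n) : sval (s a) = phi \o sval a \o psi.
  by apply: functional_extensionality => r /=; rewrite phi_intertwines psiK.
have [t sK tK] := s_bij.
exists phi, psi; split=> //; split=> //.
- exact: phi_linear.
- by move=> a a_in; rewrite -(s_conj (exist _ a a_in)); exact: proj2_sig.
- move=> b b_in; exists (sval (t (exist _ b b_in))); first exact: proj2_sig.
  by rewrite -s_conj tK.
Qed.

End Intertwiner.

Lemma alg_aut_is_conj :
  exists phi psi : Pn K n -> Pn K n,
    normalizes phi psi /\ forall a : Sn K n, sval (s a) = phi \o sval a \o psi.
Proof. by have [w [gm [w_fixed w_gm]]] := fixed_vector; exact: conj_of_intertwiner w_gm. Qed.

End AutomorphismIsConjugation.

Unset Implicit Arguments.

Theorem theorem3p2 (K : fieldType) (n : nat) (charK0 : [pchar K] =i pred0) :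
  (forall s : Sn K n -> Sn K n, is_alg_aut s ->
     exists phi psi : Pn K n -> Pn K n,
       normalizes phi psi /\ forall a : Sn K n, sval (s a) = phi \o sval a \o psi) /\
  (forall phi psi : Pn K n -> Pn K n, normalizes phi psi ->
     exists s : Sn K n -> Sn K n,
       is_alg_aut s /\ forall a : Sn K n, sval (s a) = phi \o sval a \o psi).
Proof.
split=> [s [s_bij s_add s_scale s_mul _]|phi psi]; last exact: conj_is_alg_aut.
exact: alg_aut_is_conj s_bij s_add s_scale s_mul.
Qed.
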